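(* $\eta^{(1)}=\frac nN$. Moreover, for an $(N,n)$ dual pair $(F,G)$ for $\mathcal H$: (i) $(F,G)\in\mathcal N^{(1)}$ if and only if $\|f_i\|\,\|g_i\|=\frac nN$ for all $1\le i\le N$; (ii) if $(F,G)\in\mathcal N^{(1)}$, then $\langle f_i,g_i\rangle=\frac nN$ for all $1\le i\le N$; the converse does not hold in general.
   Context: $\mathcal H$ is a complex Hilbert space of finite dimension $n$, inner product linear in the first argument, $N\ge n$. A finite sequence $F=\{f_i\}_{i=1}^N$ is a frame if there are $0<A\le B$ with $A\|f\|^2\le\sum_i|\langle f,f_i\rangle|^2\le B\|f\|^2$ for all $f$. $G=\{g_i\}_{i=1}^N$ is a dual of $F$ if $f=\sum_i\langle f,g_i\rangle f_i$ for all $f$; $(F,G)$ is then an $(N,n)$ dual pair. $E_{\Lambda,F,G}f=\sum_{i\in\Lambda}\langle f,f_i\rangle g_i$ for $\Lambda\subseteq\{1,\dots,N\}$. The numerical radius is $\omega(T)=\sup\{|\langle Tf,f\rangle|:\|f\|=1\}$; $\eta^{(1)}_{F,G}=\max_{1\le i\le N}\omega(E_{\{i\},F,G})$; $\eta^{(1)}=\inf\{\eta^{(1)}_{F,G}:(F,G)\text{ an }(N,n)\text{ dual pair}\}$; $\mathcal N^{(1)}=\{(F,G):\eta^{(1)}_{F,G}=\eta^{(1)}\}$. *)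

(* R : realType, complex scalars R[i] (mathcomp-real-closed),
   H = 'cV[R[i]]_n (column vectors), finite sequences indexed by 'I_N. *)
From HB Require Import structures.
From mathcomp Require Import all_boot all_order all_algebra.
From mathcomp Require Import complex.
From mathcomp Require Import classical_sets reals.
Set Implicit Arguments. Unset Strict Implicit. Unset Printing Implicit Defensive.
Import Order.TTheory GRing.Theory Num.Theory.
Local Open Scope ring_scope.
Local Open Scope classical_set_scope.

Section Frames.
Variable R : realType.
Local Notation C := R[i].

Definition ip (n : nat) (f g : 'cV[C]_n) : C :=
  \sum_(k < n) f k 0 * (g k 0)^*.

Definition cabs (z : C) : R := Normc.normc z.

Definition vnorm (n : nat) (f : 'cV[C]_n) : R := Num.sqrt (@complex.Re R (ip f f)).

Definition is_frame (n N : nat) (F : 'I_N -> 'cV[C]_n) : Prop :=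
  exists A B : R, 0 < A /\ A <= B /\
    forall f : 'cV[C]_n,
      A * vnorm f ^+ 2 <= \sum_(i < N) cabs (ip f (F i)) ^+ 2 /\
      \sum_(i < N) cabs (ip f (F i)) ^+ 2 <= B * vnorm f ^+ 2.

Definition is_dual (n N : nat) (F G : 'I_N -> 'cV[C]_n) : Prop :=
  forall f : 'cV[C]_n, f = \sum_(i < N) ip f (G i) *: F i.

Definition dual_pair (n N : nat) (F G : 'I_N -> 'cV[C]_n) : Prop :=
  is_frame F /\ is_dual F G.

Definition E_op (n N : nat) (L : {set 'I_N}) (F G : 'I_N -> 'cV[C]_n)
  (f : 'cV[C]_n) : 'cV[C]_n :=
  \sum_(i in L) ip f (F i) *: G i.

Definition numrad (n : nat) (T : 'cV[C]_n -> 'cV[C]_n) : R :=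
  sup [set cabs (ip (T f) f) | f in [set f : 'cV[C]_n | vnorm f = 1]].

(* eta^(1)_{F,G} = max_i omega(E_{{i},F,G}) (all terms are >= 0) *)
Definition eta1FG (n N : nat) (F G : 'I_N -> 'cV[C]_n) : R :=
  \big[Num.max/0]_(i < N) numrad (E_op [set i] F G).

Definition eta1 (n N : nat) : R :=
  inf [set eta1FG FG.1 FG.2 |
       FG in [set FG : ('I_N -> 'cV[C]_n) * ('I_N -> 'cV[C]_n) |
              dual_pair FG.1 FG.2]].

Definition inN1 (n N : nat) (F G : 'I_N -> 'cV[C]_n) : Prop :=
  eta1FG F G = eta1 n N.

End Frames.

From HB Require Import structures.
From mathcomp Require Import all_boot all_order all_algebra.
From mathcomp Require Import cyclic separable cyclotomic.
From mathcomp Require Import complex.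
From mathcomp Require Import boolp classical_sets reals.
From mathcomp Require Import ring.
Import Order.TTheory GRing.Theory Num.Theory.
Local Open Scope ring_scope.
Set Implicit Arguments. Unset Strict Implicit. Unset Printing Implicit Defensive.

(* For a dual pair, [E_i f = <f,f_i> g_i] is a rank-one operator, whose numerical
   radius lies between [(|f_i| |g_i| + |<f_i,g_i>|)/2] and [|f_i| |g_i|].  Since
   [\sum_i <f_i,g_i> = tr Id = n], some [|<f_i,g_i>|] is at least [n/N], whence
   [eta^(1)_{F,G} >= n/N]; if equality holds, the triangle inequality forces every
   [<f_i,g_i>] to equal [n/N], and then the two bounds force [|f_i| |g_i| = n/N].
   The harmonic frame [f_i = (z^(k i))_k], [g_i = f_i/N], with [z] a primitive
   [N]-th root of unity, has [|f_i| |g_i| = n/N], so the bound is attained.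
   The pair [F = {e_1, e_1 + e_2}], [G = {e_1 - e_2, e_2}] has [<f_i,g_i> = 1] but
   [|f_1| |g_1| = sqrt 2]. *)

Lemma prim_root_exists (F : numClosedFieldType) N :
  (0 < N)%N -> exists z : F, N.-primitive_root z.
Proof.
move=> N_gt0; pose p : {poly F} := 'X^N - 1.
have [r Dp] := closed_field_poly_normal p.
rewrite (monicP _) ?monicXnsubC // scale1r in Dp.
have rN1 : all N.-unity_root r by apply/allP=> z; rewrite -root_prod_XsubC -Dp.
have sz_r : (N < (size r).+1)%N.
  by rewrite -(size_prod_XsubC r id) -Dp size_XnsubC.
have [|z] := hasP (has_prim_root N_gt0 rN1 _ sz_r); last by exists z.
by rewrite -separable_prod_XsubC -Dp separable_Xn_sub_1 // pnatr_eq0 -lt0n.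
Qed.

Lemma phase_exists (F : numClosedFieldType) (c : F) :
  exists2 mu : F, `|mu| = 1 & mu * c = `|c|.
Proof.
have [->|c0] := eqVneq c 0; first by exists 1; rewrite ?normr1 ?normr0 ?mulr0.
exists (`|c| / c); last by rewrite divfK.
by rewrite normrM normfV normr_id divff ?normr_eq0.
Qed.

Lemma sum_unity_root (F : idomainType) N (x : F) : x ^+ N = 1 ->
  \sum_(i < N) x ^+ i = if x == 1 then N%:R else 0.
Proof.
move=> xN; case: eqP => [->|/eqP x1].
  by rewrite (eq_bigr (fun=> 1)) ?sumr_const ?card_ord // => i _; rewrite expr1n.
have := subrX1 x N; rewrite xN subrr => /esym/eqP.
by rewrite mulf_eq0 subr_eq0 (negbTE x1) => /eqP.
Qed.

Section InnerProduct.
Variables (R : realType) (n : nat).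
Local Notation C := R[i].
Local Notation rc := (real_complex R).
Implicit Types (f g h : 'cV[C]_n) (z : C).

Lemma cabsE z : rc (cabs z) = `|z|.
Proof. by case: z. Qed.

Lemma cabs_ge0 z : 0 <= cabs z.
Proof. by rewrite -ler0c cabsE normr_ge0. Qed.

Lemma ipC f g : ip g f = (ip f g)^*.
Proof.
rewrite /ip rmorph_sum; apply: eq_bigr => k _.
by rewrite rmorphM /= conjCK mulrC.
Qed.

Lemma ipZl z f g : ip (z *: f) g = z * ip f g.
Proof.
rewrite /ip big_distrr; apply: eq_bigr => k _.
by rewrite mxE; exact/esym/mulrA.
Qed.

Lemma ipZr z f g : ip f (z *: g) = z^* * ip f g.
Proof. by rewrite ipC ipZl rmorphM /= -ipC. Qed.

Lemma ipDl f g h : ip (f + g) h = ip f h + ip g h.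
Proof. by rewrite /ip -big_split; apply: eq_bigr => k _; rewrite mxE mulrDl. Qed.

Lemma ipDr f g h : ip h (f + g) = ip h f + ip h g.
Proof. by rewrite ipC ipDl rmorphD /= -!ipC. Qed.

Lemma ipNl f g : ip (- f) g = - ip f g.
Proof. by rewrite -scaleN1r ipZl mulN1r. Qed.

Lemma ipNr f g : ip g (- f) = - ip g f.
Proof. by rewrite -scaleN1r ipZr rmorphN1 mulN1r. Qed.

Lemma ip0r f : ip f 0 = 0.
Proof. by rewrite -(scale0r 0) ipZr rmorph0 mul0r. Qed.

Lemma ip_suml (I : finType) (a : I -> C) (v : I -> 'cV[C]_n) g :
  ip (\sum_i a i *: v i) g = \sum_i a i * ip (v i) g.
Proof.
rewrite /ip; under eq_bigr do rewrite summxE big_distrl.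
rewrite exchange_big; apply: eq_bigr => i _.
by rewrite big_distrr; apply: eq_bigr => k _; rewrite mxE; exact/esym/mulrA.
Qed.

Lemma ip_ge0 f : 0 <= ip f f.
Proof. by rewrite sumr_ge0 // => k _; rewrite -normCK exprn_ge0. Qed.

Lemma ip_eq0 f : (ip f f == 0) = (f == 0).
Proof.
apply/idP/eqP => [/eqP f0|->]; last by rewrite ip0r.
have sq_ge0 (k : 'I_n) : xpredT k -> 0 <= f k 0 * (f k 0)^*.
  by rewrite -normCK exprn_ge0.
apply/matrixP => k j; rewrite ord1 mxE; apply/eqP.
have := psumr_eq0P sq_ge0 f0 (i := k) isT.
by rewrite -normCK => /eqP; rewrite expf_eq0 /= normr_eq0.
Qed.

Lemma vnorm_ge0 f : 0 <= vnorm f.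
Proof. exact: sqrtr_ge0. Qed.

Lemma vnormCK f : rc (vnorm f) ^+ 2 = ip f f.
Proof.
have ReE := RRe_real (ger0_real (ip_ge0 f)).
by rewrite -rmorphXn sqr_sqrtr /= ?ReE // -ler0c ReE ip_ge0.
Qed.

Lemma vnorm2 f : vnorm f ^+ 2 = \sum_k cabs (f k 0) ^+ 2.
Proof.
apply: complexI; rewrite rmorphXn vnormCK rmorph_sum /ip; apply: eq_bigr => k _.
by rewrite rmorphXn /= cabsE normCK.
Qed.

Lemma normC_ip_sqr_le f g : `|ip f g| ^+ 2 <= ip f f * ip g g.
Proof.
have [g0|gn0] := eqVneq g 0; first by rewrite g0 !ip0r normr0 expr0n mulr0.
have b_gt0 : 0 < ip g g by rewrite lt_def ip_eq0 gn0 ip_ge0.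
have bC : (ip g g)^* = ip g g by rewrite conj_Creal // gtr0_real.
have := ip_ge0 (f - (ip f g / ip g g) *: g).
rewrite ipDl !ipDr !ipNl !ipNr !ipZl !ipZr [ip g f]ipC rmorphM fmorphV /= bC normCK.
set a := ip f f; set b := ip g g; set c := ip f g.
have -> : a - c^* / b * c + (- (c / b * c^*) - - (c / b * (c^* / b * b)))
    = a - c * c^* / b by field; rewrite gt_eqF.
by rewrite subr_ge0 ler_pdivrMr.
Qed.

Lemma normC_ip_le f g : `|ip f g| <= rc (vnorm f) * rc (vnorm g).
Proof.
rewrite -(@ler_pXn2r _ 2) ?nnegrE ?normr_ge0 ?mulr_ge0 ?ler0c ?vnorm_ge0 //.
by rewrite exprMn !vnormCK normC_ip_sqr_le.
Qed.

Lemma cabs_ip_le f g : cabs (ip f g) <= vnorm f * vnorm g.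
Proof. by rewrite -lecR cabsE rmorphM normC_ip_le. Qed.

Lemma cabs_ipp f : cabs (ip f f) = vnorm f ^+ 2.
Proof. by apply: complexI; rewrite cabsE rmorphXn vnormCK ger0_norm ?ip_ge0. Qed.

Lemma sum_cabs_ip_sqr_le (I : finType) (H : I -> 'cV[C]_n) f :
  \sum_i cabs (ip f (H i)) ^+ 2 <= vnorm f ^+ 2 * \sum_i vnorm (H i) ^+ 2.
Proof.
rewrite mulr_sumr; apply: ler_sum => i _; rewrite -exprMn.
by rewrite ler_pXn2r ?nnegrE ?cabs_ge0 ?mulr_ge0 ?vnorm_ge0 ?cabs_ip_le.
Qed.

Lemma ip_deltal (k : 'I_n) g : ip (delta_mx k 0) g = (g k 0)^*.
Proof.
rewrite /ip (bigD1 k) //= big1 ?addr0 => [|j /negbTE jk].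
  by rewrite mxE !eqxx mul1r.
by rewrite mxE jk mul0r.
Qed.

End InnerProduct.

Section NumericalRadius.
Variables (R : realType) (n : nat).
Local Notation C := R[i].
Local Notation rc := (real_complex R).
Implicit Types (T : 'cV[C]_n -> 'cV[C]_n) (u v w f : 'cV[C]_n).

Lemma numrad_le T c : 0 <= c ->
  (forall f, vnorm f = 1 -> cabs (ip (T f) f) <= c) -> numrad T <= c.
Proof.
move=> c_ge0 T_le; rewrite /numrad; set S := (X in sup X).
have [S0|/set0P [y Sy]] := eqVneq S set0; first by rewrite S0 sup0.
by apply: ge_sup; [exists y | move=> _ [f /= f1 <-]; exact: T_le].
Qed.

Lemma le_numrad T c f :
  (forall g, vnorm g = 1 -> cabs (ip (T g) g) <= c) ->
  vnorm f = 1 -> cabs (ip (T f) f) <= numrad T.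
Proof.
move=> T_le f1; apply: ub_le_sup; last by exists f.
by exists c => _ [g /= g1 <-]; exact: T_le.
Qed.

Lemma numrad_ge0 T c :
  (forall f, vnorm f = 1 -> cabs (ip (T f) f) <= c) -> 0 <= numrad T.
Proof.
move=> T_le; rewrite /numrad; set S := (X in sup X).
have [S0|/set0P [_ [f /= f1 _]]] := eqVneq S set0; first by rewrite S0 sup0.
exact: le_trans (cabs_ge0 _) (le_numrad T_le f1).
Qed.

Definition rank1_op u v f : 'cV[C]_n := ip f u *: v.

Lemma ip_rank1_op u v f : ip (rank1_op u v f) f = ip f u * ip v f.
Proof. exact: ipZl. Qed.

Lemma rank1_op_bounded u v f : vnorm f = 1 ->
  cabs (ip (rank1_op u v f) f) <= vnorm u * vnorm v.
Proof.
move=> f1; rewrite ip_rank1_op -lecR cabsE normrM rmorphM.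
have := ler_pM (normr_ge0 _) (normr_ge0 _) (normC_ip_le f u) (normC_ip_le v f).
by rewrite f1 rmorph1 mul1r mulr1.
Qed.

Lemma numrad_rank1_op_le u v : numrad (rank1_op u v) <= vnorm u * vnorm v.
Proof. by apply: numrad_le (@rank1_op_bounded u v); rewrite mulr_ge0 ?vnorm_ge0. Qed.

Lemma numrad_rank1_op_ge0 u v : 0 <= numrad (rank1_op u v).
Proof. exact: numrad_ge0 (@rank1_op_bounded u v). Qed.

Lemma normC_ip_rank1_op_le u v w :
  `|ip (rank1_op u v w) w| <= rc (numrad (rank1_op u v)) * ip w w.
Proof.
have [->|w0] := eqVneq w 0; first by rewrite !ip0r normr0 mulr0.
have ww_gt0 : 0 < ip w w by rewrite lt_def ip_eq0 w0 ip_ge0.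
set s := (sqrtC (ip w w))^-1.
have sC : s^* = s by rewrite conj_Creal // rpredV sqrtC_real // ltW.
have ss : s * s = (ip w w)^-1 by rewrite -expr2 exprVn sqrtCK.
have sw1 : vnorm (s *: w) = 1.
  apply: complexI; rewrite rmorph1; apply/eqP.
  rewrite -sqrp_eq1 ?ler0c ?vnorm_ge0 // vnormCK ipZl ipZr sC mulrA ss.
  by rewrite mulVf // gt_eqF.
have := le_numrad (@rank1_op_bounded u v) sw1.
have -> : ip (rank1_op u v (s *: w)) (s *: w)
    = ip (rank1_op u v w) w / ip w w.
  by rewrite !ip_rank1_op ipZl ipZr sC -ss; ring.
rewrite -lecR cabsE normrM normfV [`|ip w w|]gtr0_norm //.
by rewrite ler_pdivrMr // mulrC.
Qed.

Lemma numrad_rank1_op_ge u v :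
  (vnorm u * vnorm v + cabs (ip u v)) / 2 <= numrad (rank1_op u v).
Proof.
rewrite -lecR !rmorphM rmorphD !rmorphM /= fmorphV /= cabsE rmorph_nat.
rewrite ipC norm_conjC.
set p := rc (vnorm u); set q := rc (vnorm v); set k : C := `|ip v u|.
have p_ge0 : 0 <= p by rewrite ler0c vnorm_ge0.
have q_ge0 : 0 <= q by rewrite ler0c vnorm_ge0.
have k_ge0 : 0 <= k by exact: normr_ge0.
have k_le : k <= q * p by exact: normC_ip_le.
have [pq0|pq_neq0] := eqVneq (p * q) 0.
  have -> : k = 0 by apply/le_anti; rewrite k_ge0 andbT -pq0 mulrC.
  by rewrite pq0 addr0 mul0r ler0c numrad_rank1_op_ge0.
have pq_gt0 : 0 < p * q by rewrite lt_def pq_neq0 mulr_ge0.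
have [mu mu1 muk] := phase_exists (ip v u).
have mu0 : mu != 0 by rewrite -normr_eq0 mu1 oner_eq0.
have muC : mu^* = mu^-1 by rewrite invC_norm mu1 expr1n invr1 mul1r.
have vu : ip v u = mu^-1 * k by rewrite -[k]muk mulKf.
have uv : ip u v = mu * k.
  by rewrite ipC vu rmorphM /= fmorphV /= muC invrK conj_Creal // ger0_real.
have pC : p^* = p by rewrite conj_Creal // ger0_real.
have qC : q^* = q by rewrite conj_Creal // ger0_real.
have uu : ip u u = p ^+ 2 by rewrite vnormCK.
have vv : ip v v = q ^+ 2 by rewrite vnormCK.
(* rotating [v] by the phase [mu] of [<v,u>] makes [w] a maximising test vector *)
set w := q *: u + (mu * p) *: v.
have wu : ip w u = p * (p * q + k) by rewrite ipDl !ipZl uu vu; field.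
have vw : ip v w = mu^-1 * (q * (p * q + k)).
  by rewrite ipDr !ipZr qC rmorphM /= pC muC vv vu; field.
have ww : ip w w = 2 * (p * q) * (p * q + k).
  by rewrite ipDl !ipDr !ipZl !ipZr qC rmorphM /= pC muC uu vv uv vu; field.
have := normC_ip_rank1_op_le u v w.
rewrite ip_rank1_op wu vw ww mulrCA normrM normfV mu1 invr1 mul1r.
have pqk_gt0 : 0 < p * q + k by rewrite ltr_wpDr.
have pqk_ge0 := ltW pqk_gt0.
rewrite ger0_norm; last by rewrite !mulr_ge0.
have X_gt0 : 0 < 2 * (p * q) * (p * q + k) by rewrite mulr_gt0 // mulr_gt0.
have -> : p * (p * q + k) * (q * (p * q + k))
    = (p * q + k) / 2 * (2 * (p * q) * (p * q + k)) by field.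
by rewrite ler_pM2r.
Qed.

Lemma cabs_ip_le_numrad_rank1_op u v : cabs (ip u v) <= numrad (rank1_op u v).
Proof.
apply: le_trans (numrad_rank1_op_ge u v).
by rewrite ler_pdivlMr // mulr_natr mulr2n lerD2r cabs_ip_le.
Qed.

End NumericalRadius.

Section DualPairs.
Variables (R : realType) (n N : nat).
Local Notation C := R[i].
Variables F G : 'I_N -> 'cV[C]_n.
Implicit Types (f : 'cV[C]_n).

Lemma E_op1 i : E_op [set i] F G = rank1_op (F i) (G i).
Proof. by apply: funext => f; rewrite /E_op big_set1. Qed.

Lemma eta1FGE :
  eta1FG F G = \big[Num.max/0]_i numrad (rank1_op (F i) (G i)).
Proof. by apply: eq_bigr => i _; rewrite E_op1. Qed.

Lemma numrad_le_eta1FG i : numrad (rank1_op (F i) (G i)) <= eta1FG F G.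
Proof. by rewrite eta1FGE (bigD1 i) //= le_max lexx. Qed.

Lemma eta1FG_ge0 : 0 <= eta1FG F G.
Proof.
rewrite eta1FGE; apply: (big_ind (fun x => 0 <= x)) => // [x y x0 _|i _].
  by rewrite le_max x0.
exact: numrad_rank1_op_ge0.
Qed.

Lemma eta1FG_le c : 0 <= c ->
  (forall i, numrad (rank1_op (F i) (G i)) <= c) -> eta1FG F G <= c.
Proof.
move=> c_ge0 le_c; rewrite eta1FGE.
by apply: (big_ind (fun x => x <= c)) => // x y xc yc; rewrite ge_max xc.
Qed.

Lemma cabs_ip_le_eta1FG i : cabs (ip (F i) (G i)) <= eta1FG F G.
Proof. exact: le_trans (cabs_ip_le_numrad_rank1_op _ _) (numrad_le_eta1FG i). Qed.

Hypothesis FG_dual : is_dual F G.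

Lemma sum_ip_dual : \sum_i ip (F i) (G i) = n%:R.
Proof.
have coord1 (k : 'I_n) : \sum_i F i k 0 * (G i k 0)^* = 1.
  have := congr1 (fun M : 'cV[C]_n => M k 0) (FG_dual (delta_mx k 0)).
  rewrite /= mxE !eqxx /= summxE => h; apply: etrans _ (esym h).
  apply: eq_bigr => i _.
  by rewrite mxE ip_deltal mulrC.
rewrite /ip exchange_big /= (eq_bigr (fun=> 1)) => [|k _]; last exact: coord1.
by rewrite sumr_const card_ord.
Qed.

Lemma vnorm_sqr_le_dual f :
  vnorm f ^+ 2 <=
    (\sum_i vnorm (G i) ^+ 2) * \sum_i cabs (ip f (F i)) ^+ 2.
Proof.
set a := vnorm f ^+ 2; set K := \sum_i _; set S := \sum_i _.
pose x : 'cV[C]_N := \col_i ip f (G i).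
pose y : 'cV[C]_N := \col_i ip f (F i).
have ff : ip f f = ip x y.
  rewrite {1}(FG_dual f) ip_suml [RHS]/ip; apply: eq_bigr => i _.
  by rewrite !mxE -ipC.
have xx : vnorm x ^+ 2 <= a * K.
  by rewrite vnorm2; under eq_bigr do rewrite mxE; exact: sum_cabs_ip_sqr_le.
have yy : vnorm y ^+ 2 = S by rewrite vnorm2; under eq_bigr do rewrite mxE.
have a_ge0 : 0 <= a by rewrite exprn_ge0 ?vnorm_ge0.
have K_ge0 : 0 <= K by rewrite sumr_ge0 // => i _; rewrite exprn_ge0 ?vnorm_ge0.
have S_ge0 : 0 <= S by rewrite sumr_ge0 // => i _; rewrite exprn_ge0 ?cabs_ge0.
have : a ^+ 2 <= a * (K * S).
  apply: le_trans (_ : (vnorm x * vnorm y) ^+ 2 <= _).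
    rewrite ler_pXn2r ?nnegrE ?mulr_ge0 ?vnorm_ge0 //.
    by rewrite /a -cabs_ipp ff cabs_ip_le.
  by rewrite exprMn yy mulrA ler_wpM2r.
have [->|a_neq0] := eqVneq a 0; first by rewrite mul0r mulr_ge0.
by rewrite expr2 ler_pM2l // lt_def a_neq0.
Qed.

Lemma dual_is_frame : is_frame F.
Proof.
set K := \sum_i vnorm (G i) ^+ 2; set L := \sum_i vnorm (F i) ^+ 2.
have K_ge0 : 0 <= K by rewrite sumr_ge0 // => i _; rewrite exprn_ge0 ?vnorm_ge0.
have L_ge0 : 0 <= L by rewrite sumr_ge0 // => i _; rewrite exprn_ge0 ?vnorm_ge0.
have K1_gt0 : 0 < 1 + K by rewrite ltr_wpDr.
exists (1 + K)^-1, (1 + L); split; first by rewrite invr_gt0.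
split; first by rewrite (le_trans (_ : _ <= 1)) ?invf_le1 ?lerDl.
move=> f; set S := \sum_i _.
have S_ge0 : 0 <= S by rewrite sumr_ge0 // => i _; rewrite exprn_ge0 ?cabs_ge0.
split.
  rewrite mulrC ler_pdivrMr // (le_trans (vnorm_sqr_le_dual f)) //.
  by rewrite mulrC ler_wpM2l // lerDr.
rewrite (le_trans (sum_cabs_ip_sqr_le F f)) // mulrC.
by rewrite ler_wpM2r ?exprn_ge0 ?vnorm_ge0 ?lerDr.
Qed.

Lemma dim_le_sum_cabs_ip : n%:R <= \sum_i cabs (ip (F i) (G i)).
Proof.
rewrite -lecR rmorph_sum rmorph_nat /=.
under eq_bigr do rewrite cabsE.
by rewrite -[X in X <= _]ger0_norm ?ler0n // -sum_ip_dual ler_norm_sum.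
Qed.

Lemma ratio_le_eta1FG : n%:R / N%:R <= eta1FG F G.
Proof.
have [N0|N_gt0] := posnP N.
  by rewrite (_ : N%:R = 0 :> R) ?invr0 ?mulr0 ?eta1FG_ge0 // N0.
rewrite ler_pdivrMr ?ltr0n // (le_trans dim_le_sum_cabs_ip) //.
apply: le_trans (_ : \sum_(i < N) eta1FG F G <= _).
  by apply: ler_sum => i _; exact: cabs_ip_le_eta1FG.
by rewrite sumr_const card_ord mulr_natr.
Qed.

Section AttainingTheBound.
Hypothesis eta1FG_ratio : eta1FG F G = n%:R / N%:R.

Lemma ip_eq_ratio i : ip (F i) (G i) = n%:R / N%:R.
Proof.
have N_gt0 : (0 < N)%N by apply: leq_ltn_trans (ltn_ord i).
have ip_le j : `|ip (F j) (G j)| <= n%:R / N%:R.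
  have := cabs_ip_le_eta1FG j; rewrite eta1FG_ratio -lecR cabsE.
  by rewrite fmorph_div !rmorph_nat.
apply: (normC_sum_upper (P := xpredT) (fun j _ => ip_le j)) => //.
rewrite sum_ip_dual sumr_const card_ord -mulr_natr.
by field; rewrite pnatr_eq0 -lt0n.
Qed.

Lemma norms_eq_ratio i : vnorm (F i) * vnorm (G i) = n%:R / N%:R.
Proof.
have cabs_ip : cabs (ip (F i) (G i)) = n%:R / N%:R.
  apply: complexI; rewrite cabsE ip_eq_ratio ger0_norm ?divr_ge0 ?ler0n //.
  by rewrite fmorph_div !rmorph_nat.
apply/le_anti; rewrite -{2}cabs_ip cabs_ip_le andbT.
have := le_trans (numrad_rank1_op_ge _ _) (numrad_le_eta1FG i).
by rewrite eta1FG_ratio cabs_ip ler_pdivrMr // mulr_natr mulr2n lerD2r.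
Qed.

End AttainingTheBound.

Lemma eta1FG_eq_ratio :
  (forall i, vnorm (F i) * vnorm (G i) = n%:R / N%:R) ->
  eta1FG F G = n%:R / N%:R.
Proof.
move=> norms; apply/le_anti; rewrite ratio_le_eta1FG andbT.
apply: eta1FG_le => [|i]; first by rewrite divr_ge0 ?ler0n.
by rewrite -(norms i) numrad_rank1_op_le.
Qed.

End DualPairs.

Section HarmonicFrame.
Variables (R : realType) (n N : nat) (z : R[i]).
Local Notation C := R[i].
Hypotheses (n_le_N : (n <= N)%N) (z_prim : N.-primitive_root z).

Definition harmonic_frame (i : 'I_N) : 'cV[C]_n := \col_(k < n) (z ^+ k) ^+ i.

Definition harmonic_dual (i : 'I_N) : 'cV[C]_n := N%:R^-1 *: harmonic_frame i.

Let N_gt0 : (0 < N)%N := prim_order_gt0 z_prim.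

Let zN : z ^+ N = 1 := prim_expr_order z_prim.

Let normr_z : `|z| = 1.
Proof.
apply/eqP; rewrite -(pexpr_eq1 N_gt0) ?normr_ge0 //.
by rewrite -normrX zN normr1.
Qed.

Let unit_mulC (m : nat) : z ^+ m * (z ^+ m)^* = 1.
Proof. by rewrite -normCK normrX normr_z !expr1n. Qed.

Let expz_inj (k l : 'I_n) : z ^+ k = z ^+ l -> k = l.
Proof.
move/eqP; rewrite (eq_prim_root_expr z_prim) => /eqP.
by rewrite !modn_small ?(leq_trans (ltn_ord _) n_le_N) //; exact: val_inj.
Qed.

Let invN_conj : (N%:R^-1 : C)^* = N%:R^-1.
Proof. by rewrite fmorphV /= rmorph_nat. Qed.

Lemma ip_harmonic_frame i : ip (harmonic_frame i) (harmonic_frame i) = n%:R.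
Proof.
rewrite /ip (eq_bigr (fun=> 1)) ?sumr_const ?card_ord // => k _.
by rewrite !mxE -!exprM unit_mulC.
Qed.

(* entry [k] of [\sum_i <f, g_i> f_i] is [N^-1 \sum_l f_l \sum_i (z^k conj(z^l))^i];
   the inner sum is [N] for [l = k] and vanishes otherwise *)
Lemma harmonic_frame_dual : is_dual harmonic_frame harmonic_dual.
Proof.
move=> f; apply/matrixP => k j; rewrite ord1 summxE.
have entry (i : 'I_N) : (ip f (harmonic_dual i) *: harmonic_frame i) k 0 =
    N%:R^-1 * \sum_l f l 0 * (z ^+ k * (z ^+ l)^*) ^+ i.
  rewrite mxE /harmonic_dual ipZr invN_conj /ip mxE -mulrA mulr_suml.
  congr (_ * _); apply: eq_bigr => l _.
  by rewrite mxE exprMn rmorphXn /= -mulrA [_ * (z ^+ k) ^+ i]mulrC.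
rewrite (eq_bigr _ (fun i _ => entry i)) -mulr_sumr exchange_big /=.
under eq_bigr do rewrite -mulr_sumr.
have unity (l : 'I_n) : (z ^+ k * (z ^+ l)^*) ^+ N = 1.
  rewrite exprMn rmorphXn /= -!exprM !(mulnC _ N) !exprM zN !expr1n.
  by rewrite -rmorphXn zN rmorph1 expr1n mulr1.
rewrite (bigD1 k) //= sum_unity_root // unit_mulC eqxx.
rewrite big1 ?addr0 => [|l lk].
  by rewrite mulrCA mulVf ?mulr1 // pnatr_eq0 -lt0n.
rewrite sum_unity_root // ifF ?mulr0 //; apply/negbTE; apply: contra lk => /eqP kl.
apply/eqP; apply: expz_inj.
by rewrite -[z ^+ l]mul1r -kl -mulrA [_^* * _]mulrC unit_mulC mulr1.
Qed.

Lemma harmonic_norms i :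
  vnorm (harmonic_frame i) * vnorm (harmonic_dual i) = n%:R / N%:R.
Proof.
apply: complexI; rewrite rmorphM fmorph_div /= !rmorph_nat.
apply/eqP; rewrite -(@eqrXn2 _ 2) //
  ?mulr_ge0 ?ler0c ?vnorm_ge0 ?divr_ge0 ?invr_ge0 ?ler0n //.
rewrite exprMn !vnormCK /harmonic_dual ipZl ipZr invN_conj ip_harmonic_frame.
by apply/eqP; field; rewrite pnatr_eq0 -lt0n.
Qed.

End HarmonicFrame.

Section Eta1.
Variable R : realType.
Local Notation C := R[i].

Lemma optimal_dual_pair_exists n N : (n <= N)%N ->
  exists F G : 'I_N -> 'cV[C]_n,
    is_dual F G /\ forall i, vnorm (F i) * vnorm (G i) = n%:R / N%:R.
Proof.
case: N => [|N] n_le_N.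
  case: n n_le_N => // _.
  exists (fun=> 0), (fun=> 0); split=> [f|[]//].
  by rewrite big_ord0; exact: flatmx0.
have [z z_prim] := @prim_root_exists C N.+1 isT.
exists (harmonic_frame n z), (harmonic_dual n z).
by split; [exact: harmonic_frame_dual | exact: harmonic_norms].
Qed.

Lemma eta1_eq n N : (n <= N)%N -> eta1 R n N = n%:R / N%:R.
Proof.
move=> n_le_N; have [F [G [FG_dual norms]]] := optimal_dual_pair_exists n_le_N.
rewrite /eta1; set S := (X in inf X).
have S_ratio : S (n%:R / N%:R).
  exists (F, G); first by split; [exact: dual_is_frame | ].
  exact: eta1FG_eq_ratio.
have S_lb : lbound S (n%:R / N%:R).
  by move=> _ [[F' G'] [_ FG'_dual] <-]; exact: ratio_le_eta1FG.
apply/le_anti; rewrite ge_inf //=; last by exists (n%:R / N%:R).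
by rewrite lb_le_inf //; exists (n%:R / N%:R).
Qed.

End Eta1.

Section Counterexample.
Variable R : realType.
Local Notation C := R[i].
Local Notation rc := (real_complex R).

(* [F = {e_1, e_1 + e_2}] and [G = {e_1 - e_2, e_2}], indexed by [0] and [1] *)
Definition ip1_frame (i : 'I_2) : 'cV[C]_2 :=
  \col_k (if (i == 0) && (k != 0) then 0 else 1).

Definition ip1_dual (i : 'I_2) : 'cV[C]_2 :=
  \col_k (if i == 0 then (if k == 0 then 1 else -1) else (if k == 0 then 0 else 1)).

Lemma ip_dim2 (f g : 'cV[C]_2) :
  ip f g = f 0 0 * (g 0 0)^* + f 1 0 * (g 1 0)^*.
Proof.
rewrite /ip !big_ord_recl big_ord0 addr0 (_ : lift ord0 ord0 = 1) //.
exact: val_inj.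
Qed.

Lemma ip1_frame_dual : is_dual ip1_frame ip1_dual.
Proof.
move=> f; apply/matrixP => k j; rewrite ord1 summxE !big_ord_recl big_ord0 addr0.
rewrite !mxE !ip_dim2 !mxE /=.
case: k => [[|[|k]] hk] //=; rewrite ?rmorph1 ?rmorph0 ?rmorphN1.
  by rewrite (_ : Ordinal hk = 0); [ring | exact: val_inj].
by rewrite (_ : Ordinal hk = 1); [ring | exact: val_inj].
Qed.

Lemma ip_ip1_frame i : ip (ip1_frame i) (ip1_dual i) = 1.
Proof.
rewrite ip_dim2 !mxE /=.
by case: i => [[|[|i]] hi] //=; rewrite ?rmorph1 ?rmorph0 ?rmorphN1; ring.
Qed.

Lemma ip1_norms_neq1 : vnorm (ip1_frame 0) * vnorm (ip1_dual 0) != 1.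
Proof.
apply/eqP => /(congr1 (fun x => rc x ^+ 2)).
rewrite rmorphM exprMn !vnormCK !ip_dim2 !mxE /= rmorph1 expr1n.
rewrite ?rmorph1 ?rmorph0 ?rmorphN1.
have -> : (1 * 1 + 0 * 0) * (1 * 1 + -1 * -1) = 2%:R :> C by ring.
by move/eqP; rewrite pnatr_eq1.
Qed.

End Counterexample.

Theorem theorem5p1 (R : realType) :
  (forall n N : nat, (n <= N)%N -> eta1 R n N = n%:R / N%:R) /\
  (forall (n N : nat) (F G : 'I_N -> 'cV[R[i]]_n),
     (n <= N)%N -> dual_pair F G ->
     (inN1 F G <-> (forall i : 'I_N, vnorm (F i) * vnorm (G i) = n%:R / N%:R)) /\
     (inN1 F G -> forall i : 'I_N, ip (F i) (G i) = (n%:R / N%:R : R[i]))) /\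
  (exists (n N : nat) (F G : 'I_N -> 'cV[R[i]]_n),
     (n <= N)%N /\ dual_pair F G /\
     (forall i : 'I_N, ip (F i) (G i) = (n%:R / N%:R : R[i])) /\ ~ inN1 F G).
Proof.
split; first exact: eta1_eq.
split.
  move=> n N F G n_le_N [_ FG_dual]; rewrite /inN1 eta1_eq //.
  split; last exact: ip_eq_ratio.
  by split; [exact: norms_eq_ratio | exact: eta1FG_eq_ratio].
have FG_dual := @ip1_frame_dual R.
exists 2%N, 2%N, (@ip1_frame R), (@ip1_dual R); rewrite divff ?pnatr_eq0 //.
split=> //; split; first by split; [exact: dual_is_frame |].
split; first exact: ip_ip1_frame.
rewrite /inN1 eta1_eq // divff ?pnatr_eq0 // => eta_eq1.
by move: (ip1_norms_neq1 R); rewrite (norms_eq_ratio FG_dual) ?divff ?pnatr_eq0 ?eqxx.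
Qed.
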